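(* Let $\alpha\in\Bbbk$, $f=z(z+\alpha)$, $A=A(f)$. Every degree-$0$ automorphism of the $\mathbb{Z}$-algebra $\overline{A}$ is inner.
   Context: $\Bbbk$ algebraically closed of characteristic $0$; $A=A(f)$ is generated by $\Bbbk[z],x,y$ with $xz=(z+1)x$, $yz=(z-1)y$, $xy=f$, $yx=f(z-1)$, graded by $\deg x=1,\deg y=-1,\deg z=0$. The $\mathbb{Z}$-algebra associated to $A$ is $\overline{A}=\bigoplus_{i,j\in\mathbb{Z}}\overline{A}_{i,j}$ with $\overline{A}_{i,j}=A_{j-i}$, with multiplication $\overline{A}_{i,j}\times\overline{A}_{j,k}\to\overline{A}_{i,k}$ induced by multiplication in $A$ and $\overline{A}_{i,j}\overline{A}_{j',k}=0$ for $j\neq j'$; $1_i\in\overline{A}_{i,i}=A_0$ denotes the unit. A degree-$0$ automorphism is a $\Bbbk$-algebra automorphism $\gamma$ of $\overline{A}$ with $\gamma(\overline{A}_{i,j})=\overline{A}_{i,j}$ and $\gamma(1_i)=1_i$ for all $i,j$. Such $\gamma$ is inner if for all $m,n\in\mathbb{Z}$ there exist $g_m\in\overline{A}_{m,m}$ and $h_n\in\overline{A}_{n,n}$ with $\gamma(w)=g_mwh_n$ for all $w\in\overline{A}_{m,n}$. *)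

From HB Require Import structures.
From mathcomp Require Import all_boot all_order all_algebra.
Set Implicit Arguments. Unset Strict Implicit. Unset Printing Implicit Defensive.
Import Order.TTheory GRing.Theory Num.Theory.
Local Open Scope ring_scope.

(* Concrete model of the generalized Weyl algebra A = A(f) over k, graded by
   deg x = 1, deg y = -1, deg z = 0.  The homogeneous component A_d is the free
   left k[z]-module of rank one with basis u_d, where u_d = x^d (d >= 0) and
   u_d = y^(-d) (d < 0).  An element of A_d is represented by its coefficient
   polynomial p : {poly k}, standing for p(z) * u_d. *)

Section GWA.
Variable k : fieldType.
Variable f : {poly k}.

(* shiftp c p = p(z + c) = sigma^c(p); we have u_d * p = shiftp d p * u_d. *)
Definition shiftp (c : int) (p : {poly k}) : {poly k} :=
  p \Po ('X + (c%:~R)%:P).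

(* x^r y^r = f(z) f(z+1) ... f(z+r-1) *)
Definition Pprod (r : nat) : {poly k} := \prod_(i < r) shiftp (Posz i) f.
(* y^r x^r = f(z-1) f(z-2) ... f(z-r) *)
Definition Qprod (r : nat) : {poly k} := \prod_(i < r) shiftp (- Posz i.+1) f.

(* u_d * u_e = ucoef d e * u_(d+e) *)
Definition ucoef (d e : int) : {poly k} :=
  match d, e with
  | Posz a, Negz b =>
      let r := minn a b.+1 in shiftp (Posz (a - r)%N) (Pprod r)
  | Negz a, Posz b =>
      let r := minn a.+1 b in shiftp (- Posz (a.+1 - r)%N) (Qprod r)
  | _, _ => 1
  end.

(* Multiplication A_d x A_e -> A_(d+e):
   (a u_d)(b u_e) = a * sigma^d(b) * (u_d u_e). *)
Definition mulA (d e : int) (a b : {poly k}) : {poly k} :=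
  a * shiftp d b * ucoef d e.

(* A degree-0 automorphism of the Z-algebra Abar (Abar_{i,j} = A_{j-i}),
   given by its restrictions gam i j : Abar_{i,j} -> Abar_{i,j}. *)
Definition degree0_aut (gam : int -> int -> {poly k} -> {poly k}) : Prop :=
  [/\ (forall i j (c : k) (a b : {poly k}),
         gam i j (c *: a + b) = c *: gam i j a + gam i j b),
      (forall i j, bijective (gam i j)),
      (forall i j l (a b : {poly k}),
         gam i l (mulA (j - i) (l - j) a b)
         = mulA (j - i) (l - j) (gam i j a) (gam j l b)) &
      (forall i, gam i i 1 = 1)].

(* gam is inner: there are g_m in Abar_{m,m} = A_0 and h_n in Abar_{n,n} = A_0
   with gam(w) = g_m w h_n for all w in Abar_{m,n} = A_{n-m}. *)
Definition inner_aut (gam : int -> int -> {poly k} -> {poly k}) : Prop :=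
  exists g h : int -> {poly k},
    forall (m n : int) (w : {poly k}),
      gam m n w = mulA (n - m) 0 (mulA 0 (n - m) (g m) w) (h n).

End GWA.

From Pilot Require Import Defs.
From HB Require Import structures.
From mathcomp Require Import all_boot all_order all_algebra.
From mathcomp Require Import ring.
Import GRing.Theory.

Set Implicit Arguments.
Unset Strict Implicit.
Unset Printing Implicit Defensive.
Local Open Scope ring_scope.

(* Multiplying on the left by elements of A_0 shows gam(w) = gam_mm(w) * gam(1_{m,n})
   on Abar_{m,n}; surjectivity makes every gam(1_{m,n}) a unit of k[z], i.e. a nonzero
   constant.  The restriction gam_mm is a k-algebra automorphism of k[z], hence the
   substitution z |-> q_m = l_m z + u_m.  Commuting with x gives q_(m+1)(z+1) = q_m(z) + 1,
   and preserving xy = f = z(z+alpha) gives 2 u_m + alpha = l_m alpha; together they force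
   q_m = z.  So gam(w) = c_{m,n} w, and multiplicativity through Abar_{m,0} x Abar_{0,n}
   gives c_{m,n} = c_{m,0} c_{0,n}, which is the required inner form. *)

Section Shift.
Variable k : fieldType.
Implicit Types (p : {poly k}) (c : int).

Lemma shiftp_by0 p : shiftp 0 p = p.
Proof. by rewrite /shiftp mulr0z polyC0 addr0 comp_polyXr. Qed.

Lemma shiftp_by1 p : shiftp 1 p = p \Po ('X + 1).
Proof. by rewrite /shiftp polyC1. Qed.

Lemma shiftpC c (a : k) : shiftp c a%:P = a%:P.
Proof. exact: comp_polyC. Qed.

Lemma shiftp1 c : shiftp c (1 : {poly k}) = 1.
Proof. by rewrite -polyC1 shiftpC. Qed.

Lemma shiftp_eq0 c p : (shiftp c p == 0) = (p == 0).
Proof. by rewrite /shiftp -!size_poly_eq0 size_comp_poly2 // size_XaddC. Qed.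

End Shift.

Section Multiplication.
Variables (k : fieldType) (f : {poly k}).
Implicit Types (a b : {poly k}) (d e : int).

Lemma ucoef0l d : ucoef f 0 d = 1.
Proof. by case: d => n //=; rewrite /Pprod min0n big_ord0 shiftp1. Qed.

Lemma ucoefr0 d : ucoef f d 0 = 1.
Proof. by case: d => n //=; rewrite /Qprod minn0 big_ord0 shiftp1. Qed.

Lemma ucoef1N1 : ucoef f 1 (-1) = f.
Proof. by rewrite /= /Pprod big_ord1 !shiftp_by0. Qed.

Lemma ucoef_neq0 d e : f != 0 -> ucoef f d e != 0.
Proof.
move=> f_neq0; case: d e => [n|n] [m|m] /=; rewrite ?oner_neq0 // shiftp_eq0;
  by apply/prodf_neq0 => i _; rewrite shiftp_eq0.
Qed.

Lemma mulA0l d a b : Defs.mulA f 0 d a b = a * b.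
Proof. by rewrite /Defs.mulA shiftp_by0 ucoef0l mulr1. Qed.

Lemma mulAr0 d a b : Defs.mulA f d 0 a b = a * shiftp d b.
Proof. by rewrite /Defs.mulA ucoefr0 mulr1. Qed.

End Multiplication.

Section AffinePoly.
Variable k : fieldType.
Implicit Types (p q : {poly k}) (l u c alpha : k).

Lemma size_comp_poly_eqX p q : p \Po q = 'X -> size q = 2.
Proof.
move=> pqX; have := size_comp_poly p q; rewrite pqX size_polyX.
by move/esym/eqP; rewrite muln_eq1 => /andP[_ /eqP]; case: (size q) => [|[|[]]].
Qed.

Lemma affine_polyE q : size q = 2 -> q = (lead_coef q)%:P * 'X + (q`_0)%:P.
Proof.
move=> q2; apply/polyP => -[|[|i]] /=; rewrite coefD coefCM coefX coefC /=.
- by rewrite mulr0 add0r.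
- by rewrite mulr1 addr0 /lead_coef q2.
- by rewrite mulr0 addr0 nth_default // q2.
Qed.

Lemma affine_poly_inj l u (l' u' : k) :
  l%:P * 'X + u%:P = l'%:P * 'X + u'%:P -> l = l' /\ u = u'.
Proof.
move=> E; split.
  by have := congr1 (coefp 1) E; rewrite /= !coefD !coefCM !coefX !coefC !mulr1 !addr0.
by have := congr1 (coefp 0) E; rewrite /= !coefD !coefCM !coefX !coefC !mulr0 !add0r.
Qed.

Lemma comp_affine_XaddC l u c :
  (l%:P * 'X + u%:P) \Po ('X + c%:P) = l%:P * 'X + (l * c + u)%:P.
Proof. by rewrite comp_polyD comp_polyM !comp_polyC comp_polyX !rmorphD rmorphM /=; ring. Qed.

(* Compare the coefficients of z^2 and z: l^2 = c and l (2u + alpha) = c alpha. *)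
Lemma affine_quadratic l u c alpha : l != 0 ->
    (l%:P * 'X + u%:P) * (l%:P * 'X + u%:P + alpha%:P) = c%:P * ('X * ('X + alpha%:P)) ->
  2 * u + alpha = l * alpha.
Proof.
move=> l_neq0 E.
have E' : (l ^+ 2 - c)%:P * 'X^2 + (l * (2 * u + alpha) - c * alpha)%:P * 'X
          + (u * (u + alpha))%:P = 0.
  transitivity ((l%:P * 'X + u%:P) * (l%:P * 'X + u%:P + alpha%:P)
                 - c%:P * ('X * ('X + alpha%:P))); last by rewrite E subrr.
  by rewrite !(polyCB, polyCD, polyCM, polyC_exp, polyC_natr); ring.
have := congr1 (coefp 2) E'; have := congr1 (coefp 1) E'.
rewrite /= !coefD !coefCM !coefXn !coefX !coefC /= !mulr1 !mulr0 !addr0 ?add0r.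
move=> /subr0_eq E1 /subr0_eq E2.
by apply: (mulfI l_neq0); rewrite E1 -E2; ring.
Qed.

End AffinePoly.

Section Degree0Aut.
Variables (k : fieldType) (f : {poly k}) (gam : int -> int -> {poly k} -> {poly k}).
Hypothesis gamP : degree0_aut f gam.
Implicit Types (i j m n : int) (p w : {poly k}).

Lemma gamD i j : {morph gam i j : a b / a + b}.
Proof. by case: gamP => lin _ _ _ a b; have := lin i j 1 a b; rewrite !scale1r. Qed.

Lemma gamM i j l a b :
  gam i l (Defs.mulA f (j - i) (l - j) a b)
  = Defs.mulA f (j - i) (l - j) (gam i j a) (gam j l b).
Proof. by case: gamP. Qed.

Lemma gam_diagC m (c : k) : gam m m c%:P = c%:P.
Proof.
case: gamP => lin _ _ gam1.
have gam0 : gam m m 0 = 0 by apply/(addrI (gam m m 0)); rewrite -gamD !addr0.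
by rewrite -[c%:P]addr0 -alg_polyC lin gam1 gam0 addr0.
Qed.

Lemma gam_mul_diag m n w : gam m n w = gam m m w * gam m n 1.
Proof. by have := gamM m m n w 1; rewrite subrr !mulA0l mulr1. Qed.

Lemma gam1_polyC m n : exists2 c : k, c != 0 & gam m n 1 = c%:P.
Proof.
case: gamP => _ /(_ m n) [g _ gK] _ _.
have : gam m n 1 \is a GRing.unit.
  by apply/unitrPr; exists (gam m m (g 1)); rewrite mulrC -gam_mul_diag gK.
by rewrite poly_unitE => /andP[/size_poly1P].
Qed.

Lemma gam_diag_comp m p : gam m m p = p \Po gam m m 'X.
Proof.
elim/poly_ind: p => [|p c IH]; first by rewrite -[0]polyC0 gam_diagC comp_polyC.
have := gamM m m m p 'X; rewrite subrr !mulA0l => gamMX.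
by rewrite gamD gamMX IH gam_diagC comp_polyD comp_polyM comp_polyX comp_polyC.
Qed.

Lemma size_gam_diagX m : size (gam m m 'X) = 2.
Proof.
case: gamP => _ /(_ m m) [g _ gK] _ _.
by apply: (@size_comp_poly_eqX _ (g 'X)); rewrite -gam_diag_comp gK.
Qed.

(* This is the relation x z = (z + 1) x seen through gam. *)
Lemma gam_diagX_shift m : gam (m + 1) (m + 1) 'X \Po ('X + 1) = gam m m 'X + 1.
Proof.
have := gamM m (m + 1) (m + 1) 1 'X.
rewrite addrAC subrr add0r subrr !mulAr0 mul1r !shiftp_by1 gam_mul_diag comp_polyX.
rewrite gamD gam_diagC polyC1 [RHS]mulrC; have [c c_neq0 ->] := gam1_polyC m (m + 1).
have cP : c%:P != 0 by rewrite polyC_eq0.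
by move=> /(mulIf cP) ->.
Qed.

(* This is the relation xy = f seen through gam. *)
Lemma gam_diag_f m : exists c : k, f \Po gam m m 'X = c%:P * f.
Proof.
have := gamM m (m + 1) m 1 1.
rewrite addrAC subrr add0r opprD addrA subrr add0r /Defs.mulA shiftp1 !mul1r.
rewrite ucoef1N1 -gam_diag_comp.
have [a _ ->] := gam1_polyC m (m + 1); have [b _ ->] := gam1_polyC (m + 1) m.
by rewrite shiftpC -polyCM; exists (a * b).
Qed.

Lemma inner_of_gam_diag_id :
  f != 0 -> (forall m p, gam m m p = p) -> inner_aut f gam.
Proof.
move=> f_neq0 gam_diag_id.
pose c m n := (gam m n 1)`_0.
have gam1E m n : gam m n 1 = (c m n)%:P.
  by have [a _ gam1] := gam1_polyC m n; rewrite /c gam1 coefC.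
have gamE m n w : gam m n w = w * (c m n)%:P.
  by rewrite gam_mul_diag gam_diag_id gam1E.
have c_cobound m n : c m n = c m 0 * c 0 n.
  have := gamM m 0 n 1 1; rewrite /Defs.mulA shiftp1 !mul1r !gam1E shiftpC.
  rewrite gamE -polyCM [RHS]mulrC.
  by move=> /(mulfI (ucoef_neq0 _ _ f_neq0)) /polyC_inj.
exists (fun m => (c m 0)%:P), (fun n => (c 0 n)%:P) => m n w.
by rewrite gamE mulAr0 mulA0l shiftpC c_cobound polyCM mulrA [w * _]mulrC.
Qed.

End Degree0Aut.

Section QuadraticF.
Variables (k : fieldType) (alpha : k) (gam : int -> int -> {poly k} -> {poly k}).
Hypotheses (two_neq0 : (2 : k) != 0)
           (gamP : degree0_aut ('X * ('X + alpha%:P)) gam).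

Lemma gam_diagX m : gam m m 'X = 'X.
Proof.
pose l j := lead_coef (gam j j 'X); pose u j := (gam j j 'X)`_0.
have gamXE j : gam j j 'X = (l j)%:P * 'X + (u j)%:P.
  exact/affine_polyE/(size_gam_diagX gamP).
have l_neq0 j : l j != 0.
  by rewrite lead_coef_eq0 -size_poly_eq0 (size_gam_diagX gamP).
have [l_shift u_shift] : l (m + 1) = l m /\ l (m + 1) * 1 + u (m + 1) = u m + 1.
  have := gam_diagX_shift gamP m; rewrite -polyC1 !gamXE comp_affine_XaddC.
  by rewrite -addrA -polyCD => /affine_poly_inj.
have u_l j : 2 * u j + alpha = l j * alpha.
  have [c] := gam_diag_f gamP j.
  rewrite gamXE comp_polyM comp_polyD comp_polyX comp_polyC.
  exact: affine_quadratic (l_neq0 j).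
have u_step : u (m + 1) = u m.
  by apply: (mulfI two_neq0); apply: (addIr alpha); rewrite !u_l l_shift.
have l1 : l m = 1 by move: u_shift; rewrite u_step l_shift mulr1 addrC => /addrI.
have u0 : u m = 0.
  apply/eqP; move: (u_l m); rewrite l1 mul1r -{2}(add0r alpha) => /addIr /eqP.
  by rewrite mulf_eq0 (negbTE two_neq0).
by rewrite gamXE l1 u0 mul1r addr0.
Qed.

End QuadraticF.

Theorem lemma5p1 (k : closedFieldType) (hchar : [pchar k] =i pred0)
    (alpha : k) (gam : int -> int -> {poly k} -> {poly k}) :
  degree0_aut ('X * ('X + alpha%:P)) gam ->
  inner_aut ('X * ('X + alpha%:P)) gam.
Proof.
move=> gamP; apply: (inner_of_gam_diag_id gamP).
  by rewrite mulf_neq0 // -size_poly_eq0 ?size_polyX ?size_XaddC.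
have two_neq0 : (2 : k) != 0 by rewrite ((pcharf0P k).1 hchar 2%N).
by move=> m p; rewrite (gam_diag_comp gamP) (gam_diagX two_neq0 gamP) comp_polyXr.
Qed.
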